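(* Let $\equiv_2$ be the equivalence relation on $\mathfrak S_n$ generated by the relations $bac\equiv_2 bca$ and $abc\equiv_2 acb$ for letters $a<b<c$ in three consecutive positions. For every $\sigma\in\mathfrak S_n$, the set of linear extensions of the poset $P_2(\sigma)$ (equivalently, words listing the values $1,\ldots,n$ once each in which every vertex of the tree $P_2(\sigma)$ appears to the right of its parent) is exactly the $\equiv_2$-class of $\sigma$.
   Context: For $\sigma=\sigma_1\cdots\sigma_n\in\mathfrak S_n$, let $m_1>m_2>\cdots>m_k=1$ be the left-to-right minima of $\sigma$, i.e. the values $\sigma_j$ all of whose left neighbours in the word are greater, listed from left to right. $P_2(\sigma)$ is the poset whose Hasse diagram is the rooted tree obtained as follows: the chain $m_1,m_2,\ldots,m_k$ with $m_1$ at the top (root), each $m_{i+1}$ a child of $m_i$; every other value $\sigma_j$ is attached as a leaf (child) of the topmost chain element $m_i$ with $m_i<\sigma_j$. Example: for $\sigma=739465281$ the chain is $7,3,2,1$, the values $8,9$ are leaves of $7$, and $4,5,6$ are leaves of $3$. *)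

From mathcomp Require Import all_boot.
From Stdlib Require Import Relation_Operators.
Set Implicit Arguments. Unset Strict Implicit. Unset Printing Implicit Defensive.

(* A permutation of [n] = {1,...,n} is represented as a word (seq nat)
   listing the values 1..n once each. *)
Definition is_perm (n : nat) (w : seq nat) : bool := perm_eq w (iota 1 n).

Definition lrmin (w : seq nat) : seq nat :=
  [seq nth 0 w j | j <- iota 0 (size w)
                 & all (fun i => nth 0 w j < nth 0 w i) (iota 0 j)].

Definition P2_parent (w : seq nat) (v : nat) : option nat :=
  let c := lrmin w in
  if v \in c then
    (if index v c is i.+1 then Some (nth 0 c i) else None)
  else Some (nth 0 c (find (fun m => m < v) c)).

Definition P2_cover (w : seq nat) (p v : nat) : bool :=
  (v \in w) && (P2_parent w v == Some p).

Definition P2_linext (n : nat) (sigma tau : seq nat) : Prop :=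
  is_perm n tau /\
  forall p v, P2_cover sigma p v -> index p tau < index v tau.

Inductive equiv2_step : seq nat -> seq nat -> Prop :=
| e2_bac (x y : seq nat) (a b c : nat) : a < b -> b < c ->
    equiv2_step (x ++ [:: b; a; c] ++ y) (x ++ [:: b; c; a] ++ y)
| e2_abc (x y : seq nat) (a b c : nat) : a < b -> b < c ->
    equiv2_step (x ++ [:: a; b; c] ++ y) (x ++ [:: a; c; b] ++ y).

Definition equiv2 : seq nat -> seq nat -> Prop :=
  clos_refl_sym_trans (seq nat) equiv2_step.

From mathcomp Require Import all_boot zify.
From Stdlib Require Import Relation_Operators.
Set Implicit Arguments. Unset Strict Implicit. Unset Printing Implicit Defensive.

(* A move [b a c ~ b c a] or [a b c ~ a c b] changes neither the multiset of
   letters nor the left-to-right minima, so P_2 is constant on a class; and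
   every permutation is a linear extension of its own tree, since a chain
   element follows the previous one and a leaf follows its parent, the first
   left-to-right minimum below it.  Conversely, induct on n: deleting the
   letter n from sigma changes only the vertex n of the tree, which is the root
   when n comes first and a leaf otherwise.  In the first case n starts every
   linear extension; in the second it starts none, and the moves [u n a ~ u a n]
   push it to the end of both words. *)

Fixpoint lrmin_below (m : nat) (w : seq nat) : seq nat :=
  if w is x :: w' then
    (if x < m then x :: lrmin_below x w' else lrmin_below m w')
  else [::].

Definition tree_parent (c : seq nat) (v : nat) : option nat :=
  if v \in c then
    (if index v c is i.+1 then Some (nth 0 c i) else None)
  else Some (nth 0 c (find (fun m => m < v) c)).

Lemma P2_parentE w : P2_parent w =1 tree_parent (lrmin w).
Proof. by []. Qed.

(* The prefix [p] stands for the letters already read; it only enters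
   through the hypothesis that its minimum is [m]. *)
Lemma lrmin_suffix p w m : (forall y, all (fun z => y < z) p = (y < m)) ->
  [seq nth 0 (p ++ w) j | j <- iota (size p) (size w)
     & all (fun i => nth 0 (p ++ w) j < nth 0 (p ++ w) i) (iota 0 j)]
  = lrmin_below m w.
Proof.
elim: w p m => [|x w IH] p m pm //=.
have nth_x : nth 0 (p ++ x :: w) (size p) = x by rewrite nth_cat ltnn subnn.
have -> : all (fun i => nth 0 (p ++ x :: w) (size p) < nth 0 (p ++ x :: w) i)
            (iota 0 (size p)) = (x < m).
  rewrite nth_x -pm -[in RHS](mkseq_nth 0 p) /mkseq all_map.
  by apply: eq_in_all => i; rewrite mem_iota add0n => /andP[_ ip] /=; rewrite nth_cat ip.
have rcons_min y : all (fun z => y < z) (rcons p x) = (y < minn m x).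
  by rewrite all_rcons pm; lia.
case: ifP => xm /=; rewrite ?nth_x -cat_rcons -(size_rcons p x) (IH _ (minn m x)) //.
- by rewrite (minn_idPr (ltnW xm)).
- by rewrite (minn_idPl _) // leqNgt xm.
Qed.

Lemma lrmin_cons x w : lrmin (x :: w) = x :: lrmin_below x w.
Proof. by rewrite -(@lrmin_suffix [:: x]) // => y /=; rewrite andbT. Qed.

Lemma lrmin_below_max m w : all (fun v => v < m) w -> lrmin w = lrmin_below m w.
Proof. by case: w => [|x w] //= /andP[xm _]; rewrite lrmin_cons xm. Qed.

Lemma lrmin_bigmax w : lrmin w = lrmin_below (\max_(v <- w) v).+1 w.
Proof. by apply/lrmin_below_max/allP => v vw; rewrite ltnS leq_bigmax_seq. Qed.

Lemma lrmin_below_lt m w : all (fun v => v < m) (lrmin_below m w).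
Proof.
elim: w m => [|x w IH] m //=; case: ifP => // xm /=.
by rewrite xm; apply: sub_all (IH x) => v /= /ltn_trans; apply.
Qed.

Lemma lrmin_below_catl x u v y :
    (forall m y, lrmin_below m (u ++ y) = lrmin_below m (v ++ y)) ->
  forall m, lrmin_below m (x ++ u ++ y) = lrmin_below m (x ++ v ++ y).
Proof. by move=> uv; elim: x => [|z x IH] m //=; case: ifP; rewrite IH. Qed.

Lemma lrmin_below_skip N m x y : m <= N ->
  lrmin_below m (x ++ N :: y) = lrmin_below m (x ++ y).
Proof.
elim: x m => [|z x IH] m mN /=; first by rewrite ltnNge mN.
by case: ifP => zm; rewrite IH //; lia.
Qed.

Lemma tree_parent_cons y c v : all (fun u => u < y) c -> v != y ->
  tree_parent (y :: c) v = Some (if y < v then y else odflt y (tree_parent c v)).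
Proof.
move=> cy vy; rewrite /tree_parent inE (negbTE vy) /= eq_sym (negbTE vy).
case: ifP => [vc|_]; last by case: ltnP.
have /allP/(_ v vc) vlt := cy; rewrite ltnNge ltnW //.
by case: (index v c).
Qed.

Lemma tree_parent_index m w v p : uniq w -> v \in w -> v < m ->
  tree_parent (lrmin_below m w) v = Some p -> index p w < index v w.
Proof.
elim: w m => [|y w IH] m //= /andP[yw uw]; rewrite inE.
case: (eqVneq v y) => [-> _ ->|vy /= vw vm].
  by rewrite /tree_parent inE eqxx /= eqxx.
have IH' m' : v < m' -> tree_parent (lrmin_below m' w) v = Some p ->
    (if y == p then 0 else (index p w).+1) < (index v w).+1.
  move=> vm' /(IH _ uw vw vm') pv; rewrite ifN //.
  by apply: contraNneq yw => ->; rewrite -index_mem (leq_trans pv) ?index_size.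
case: ifP => ym; last exact: IH' vm.
rewrite tree_parent_cons ?lrmin_below_lt //; case: ltnP => [_ [<-]|]; first by rewrite eqxx.
rewrite leq_eqVlt (negbTE vy) /= => vy'.
by case Ep: tree_parent => [p'|] [?]; subst; [exact: IH' vy' Ep | rewrite eqxx].
Qed.

Lemma P2_cover_index w p v : uniq w -> P2_cover w p v -> index p w < index v w.
Proof.
move=> uw /andP[vw /eqP]; rewrite P2_parentE lrmin_bigmax.
by apply: tree_parent_index; rewrite ?ltnS ?leq_bigmax_seq.
Qed.

Lemma P2_parent_neq_head w v : v \in w -> v != head 0 w ->
  exists p, P2_parent w v = Some p.
Proof.
case: w => [|z w] //= vw vz.
by rewrite P2_parentE lrmin_cons tree_parent_cons ?lrmin_below_lt //; eexists.
Qed.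

Lemma equiv2_invariant (T : Type) (f : seq nat -> T) :
    (forall s t, equiv2_step s t -> f s = f t) ->
  forall s t, equiv2 s t -> f s = f t.
Proof. by move=> fP s t; elim=> {s t} [s t /fP| | s t _ -> | s t u _ -> _ ->]. Qed.

Lemma equiv2_step_perm s t : equiv2_step s t -> perm_eq s t.
Proof.
by case=> x y a b c _ _; rewrite perm_cat2l perm_cat2r perm_cons (perm_catC [:: _]).
Qed.

Lemma equiv2_perm s t : equiv2 s t -> perm_eq s t.
Proof.
move=> st; apply/(perm_sortP leq_total leq_trans anti_leq).
move: st; apply: equiv2_invariant => {}s {}t /equiv2_step_perm.
exact/(perm_sortP leq_total leq_trans anti_leq).
Qed.

(* In [b a c] and [a b c] the letter [c] follows a smaller letter, so it is
   never a left-to-right minimum, and the moved letters keep their status. *)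
Lemma equiv2_lrmin s t : equiv2 s t -> lrmin s = lrmin t.
Proof.
apply: equiv2_invariant => {}s {}t st.
rewrite !lrmin_bigmax (perm_big _ (equiv2_step_perm st)).
by case: st => x y a b c ab bc; apply: lrmin_below_catl => m z /=;
  do ![case: ifP => ? /=]; try lia.
Qed.

Lemma equiv2_linext n sigma tau : is_perm n sigma -> equiv2 sigma tau ->
  P2_linext n sigma tau.
Proof.
move=> sigma_perm st; have st_perm := equiv2_perm st.
have tau_perm : is_perm n tau by rewrite /is_perm -(permPl st_perm).
split=> // p v; rewrite /P2_cover P2_parentE (equiv2_lrmin st) (perm_mem st_perm).
by apply: P2_cover_index; rewrite (perm_uniq tau_perm) iota_uniq.
Qed.

Lemma equiv2_cat x y s t : equiv2 s t -> equiv2 (x ++ s ++ y) (x ++ t ++ y).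
Proof.
elim=> {s t} [s t st| s | s t _ | s t u _ st _ tu]; last 3 first.
- exact: rst_refl.
- exact: rst_sym.
- exact: rst_trans tu.
apply: rst_step; case: st => x' y' a b c ab bc.
- by have := e2_bac (x ++ x') (y' ++ y) ab bc; rewrite -!catA.
- by have := e2_abc (x ++ x') (y' ++ y) ab bc; rewrite -!catA.
Qed.

Lemma equiv2_swap_max x y u a N : u != a -> u < N -> a < N ->
  equiv2 (x ++ [:: u; N; a] ++ y) (x ++ [:: u; a; N] ++ y).
Proof.
move=> ua uN aN; apply/rst_sym/rst_step.
by case: ltngtP ua => // [ua | au] _; [apply: e2_abc | apply: e2_bac].
Qed.

Lemma equiv2_max_to_end z x y N : uniq (z :: x ++ y) ->
    all (fun v => v < N) (z :: x ++ y) ->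
  equiv2 (z :: x ++ N :: y) (z :: x ++ y ++ [:: N]).
Proof.
elim: y x => [|a y IH] x uxy lt_xy; first exact: rst_refl.
apply: (@rst_trans _ _ _ (z :: rcons x a ++ N :: y)); last first.
  by rewrite -[x ++ a :: _]cat_rcons; apply: IH; rewrite cat_rcons.
have u_lt : last z x < N by apply: (allP lt_xy); rewrite -cat_cons mem_cat mem_last.
have a_lt : a < N by apply: (allP lt_xy); rewrite -cat_cons mem_cat mem_head orbT.
have ua : last z x != a.
  move: uxy; rewrite -cat_cons cat_uniq => /and3P[_ /hasPn/(_ a (mem_head _ _)) az _].
  by apply: contraNneq az => <-; rewrite mem_last.
have -> : z :: x ++ N :: a :: y = belast z x ++ [:: last z x; N; a] ++ y.
  by rewrite -cat_cons lastI cat_rcons.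
have -> : z :: rcons x a ++ N :: y = belast z x ++ [:: last z x; a; N] ++ y.
  by rewrite cat_rcons -cat_cons lastI cat_rcons.
exact: equiv2_swap_max.
Qed.

Lemma is_perm_uniq n w : is_perm n w -> uniq w.
Proof. by move=> /perm_uniq ->; apply: iota_uniq. Qed.

Lemma is_perm_lt n w : is_perm n w -> all (fun v => v < n.+1) w.
Proof. by move=> wn; apply/allP => v; rewrite (perm_mem wn) mem_iota; lia. Qed.

Lemma is_perm_remove_max n x y :
  is_perm n.+1 (x ++ n.+1 :: y) -> is_perm n (x ++ y).
Proof.
move=> xy; rewrite /is_perm -(perm_cons n.+1).
apply: perm_trans (perm_trans _ xy) _; first by rewrite -cat1s perm_catCA.
by rewrite -(addn1 n) iotaD perm_catC add1n addn1 /= perm_refl.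
Qed.

Lemma index_remove (x y : seq nat) (N p v : nat) : p != N -> v != N ->
    index p (x ++ N :: y) < index v (x ++ N :: y) ->
  index p (x ++ y) < index v (x ++ y).
Proof.
move=> pN vN; rewrite !index_cat /= !(eq_sym N) (negbTE pN) (negbTE vN).
case: ifP => px; case: ifP => vx; try lia.
by rewrite -index_mem in px => _; apply: leq_trans px (leq_addr _ _).
Qed.

(* The inserted letter [N] is the root if [x] is empty and a leaf otherwise;
   in both cases the other edges of the tree are unchanged. *)
Lemma P2_cover_insert_max x y N p v : all (fun u => u < N) (x ++ y) ->
  P2_cover (x ++ y) p v -> P2_cover (x ++ N :: y) p v.
Proof.
move=> lt_xy /andP[vxy par]; rewrite /P2_cover.
have -> : v \in x ++ N :: y.
  by move: vxy; rewrite !mem_cat inE => /orP[] ->; rewrite ?orbT.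
case: x lt_xy vxy par => [|z x] /= lt_xy vxy.
- have vN : v < N by apply: (allP lt_xy).
  rewrite !P2_parentE lrmin_cons (lrmin_below_max lt_xy).
  rewrite tree_parent_cons ?lrmin_below_lt ?ltn_eqF // ltnNge ltnW //=.
  by case: tree_parent.
- have zN : z <= N by rewrite ltnW //; case/andP: lt_xy.
  by rewrite !P2_parentE !lrmin_cons lrmin_below_skip.
Qed.

Lemma linext_head n sigma h t : is_perm n sigma ->
  P2_linext n sigma (h :: t) -> h = head 0 sigma.
Proof.
move=> sigma_perm [tau_perm cover]; apply/eqP/contraT => h_head.
have hs : h \in sigma by rewrite (perm_mem sigma_perm) -(perm_mem tau_perm) mem_head.
have [p hp] := P2_parent_neq_head hs h_head.
by have := cover p h; rewrite /P2_cover hs hp eqxx /= eqxx => /(_ isT).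
Qed.

Lemma linext_remove_max n x y x' y' : is_perm n.+1 (x ++ n.+1 :: y) ->
    P2_linext n.+1 (x ++ n.+1 :: y) (x' ++ n.+1 :: y') ->
  P2_linext n (x ++ y) (x' ++ y').
Proof.
move=> sigma_perm [tau_perm cover]; split; first exact: is_perm_remove_max.
have xy_perm := is_perm_remove_max sigma_perm.
have lt_xy := is_perm_lt xy_perm.
move=> p v pv; apply: index_remove (cover _ _ (P2_cover_insert_max lt_xy pv)).
- have pxy : p \in x ++ y.
    by rewrite -index_mem (leq_trans (P2_cover_index (is_perm_uniq xy_perm) pv)) ?index_size.
  by rewrite ltn_eqF ?(allP lt_xy).
- by case/andP: pv => vxy _; rewrite ltn_eqF ?(allP lt_xy).
Qed.

Lemma linext_equiv2 n sigma tau : is_perm n sigma -> P2_linext n sigma tau ->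
  equiv2 sigma tau.
Proof.
elim: n sigma tau => [|n IH] sigma tau sigma_perm lin.
  case: lin => /perm_nilP -> _; move/perm_nilP: sigma_perm => ->; exact: rst_refl.
have split_max w : is_perm n.+1 w -> exists x y, w = x ++ n.+1 :: y.
  move=> /perm_mem w_mem; have : n.+1 \in w by rewrite w_mem mem_iota; lia.
  by case/splitPr=> x y; exists x, y.
have [tau_perm _] := lin.
have [x [y sigma_eq]] := split_max _ sigma_perm; subst sigma.
have [x' [y' tau_eq]] := split_max _ tau_perm; subst tau.
have equiv_rem := IH _ _ (is_perm_remove_max sigma_perm) (linext_remove_max sigma_perm lin).
have lt_xy := is_perm_lt (is_perm_remove_max sigma_perm).
have uniq_tau := is_perm_uniq tau_perm.
case: x sigma_perm lin equiv_rem lt_xy => [|z x] sigma_perm lin equiv_rem lt_xy;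
  case: x' tau_perm uniq_tau lin equiv_rem => [|h x'] tau_perm uniq_tau lin equiv_rem.
- by have := equiv2_cat [:: n.+1] [::] equiv_rem; rewrite !cats0.
- by move: uniq_tau; rewrite (linext_head sigma_perm lin) /= mem_cat inE eqxx orbT.
- have /= := linext_head sigma_perm lin; move: lt_xy => /= /andP[zN _] nz.
  by rewrite -nz ltnn in zN.
- have tau_rem := is_perm_remove_max tau_perm.
  have sigma_rem := is_perm_remove_max sigma_perm.
  apply: rst_trans; first exact: equiv2_max_to_end (is_perm_uniq sigma_rem) lt_xy.
  apply: rst_trans; last first.
    exact/rst_sym/(equiv2_max_to_end (is_perm_uniq tau_rem) (is_perm_lt tau_rem)).
  by have := equiv2_cat [::] [:: n.+1] equiv_rem; rewrite /= -!catA.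
Qed.

Theorem mainTheorem12 (n : nat) (sigma : seq nat) :
  is_perm n sigma ->
  forall tau : seq nat, P2_linext n sigma tau <-> equiv2 sigma tau.
Proof.
move=> sigma_perm tau; split; first exact: linext_equiv2.
exact: equiv2_linext.
Qed.
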